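(* Let $P\in\mathfrak N_2$ and let $(k,U,s,t)$ be a retractive up-split of $P$ with $S=s[P(0\to k)\setminus U]$ and $T=t[P(k+1\to h_P)]$. There exists a retraction $r$ of $P$ whose image is the induced subposet $S\cup T$, forming the ordinal sum $S\oplus T$, with $r(x)=s(x)$ for $x\in P(0\to k)\setminus U$, $r(x)\in T$ for $x\in U$, and $r(x)=t(x)$ for $x\in P(k+1\to h_P)$, if and only if $$S(h_S) < T(0) \quad\text{and}\quad \forall\, u\in U\ \exists\, v\in T(0):\ u\not< p\text{ for all }p\in t^{-1}(v).$$
   Context: All posets are finite. For a poset $P$ let $h_P$ be its height. The level sets are $P(0)=\min P$ and $P(k+1)=\min\big(P\setminus\bigcup_{i=0}^k P(i)\big)$. Write $P(k\to\ell)=\bigcup_{i=k}^{\ell}P(i)$ and identify subsets with induced subposets. For $A,B\subseteq P$, $A<B$ means $a<b$ for all $a\in A,b\in B$. A retraction of $P$ is an idempotent order-preserving map $r:P\to P$; its image is a retract. A 6-crown is $x_0<y_0>x_1<y_1>x_2<y_2>x_0$ with no other comparabilities. Type $3C$: three disjoint 2-element chains, no further comparabilities. A 4-crown stack is a poset $Q$ of height $\ge1$ all of whose consecutive level pairs $Q(i)\cup Q(i+1)$ are isomorphic to the ordinal sum of two 2-element antichains (an ordinal sum of 2-element antichains). A section of width three is a poset $P$ of height $h_P\ge1$ with carrier $\{c_{k,j}: k\in[0,h_P], j\in\{0,1,2\}\}$ such that: $c_{0,j}<\dots<c_{h_P,j}$ for each $j$; each $\{c_{k,0},c_{k,1},c_{k,2}\}$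 is an antichain; $c_{k,i}<c_{\ell,j}\Rightarrow c_{k,i+1}<c_{\ell,j+1}$ (indices mod 3); and no $P(k)\cup P(k+1)$ is the ordinal sum of two 3-antichains. It is nice if for all $x<y$: $\{z:z>x\}\not\subseteq\{z:z\ge y\}$ and $\{z:z<y\}\not\subseteq\{z:z\le x\}$. $\mathfrak N_2$ is the class of nice sections of width three with height $\ge2$ and horizon 2, i.e. $P(k)<P(\ell)$ whenever $\ell\ge k+2$, with 2 the smallest such integer. For $P\in\mathfrak N_2$, a retractive up-split is a quadruple $(k,U,s,t)$ with $k\in[0,h_P-1]$, $U\subset P(0\to k)$, $s:P(0\to k)\setminus U\to S$ a retraction and $t:P(k+1\to h_P)\to T$ a retraction, where $S,T$ are each a 2-element antichain or a 4-crown stack. $S(\cdot)$ and $T(\cdot)$ denote the level sets of $S$ and $T$. *)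

(* A finite poset is a finType T with a relation le : rel T
   satisfying the partial order axioms; subsets (induced subposets) are {set T}. *)
From mathcomp Require Import all_boot.
Set Implicit Arguments. Unset Strict Implicit. Unset Printing Implicit Defensive.

Section Posets.
Variables (T : finType) (le : rel T).

Definition is_poset : Prop :=
  reflexive le /\ antisymmetric le /\ transitive le.

Definition lt : rel T := fun x y => (x != y) && le x y.

Definition setlt (A B : {set T}) : Prop :=
  forall a b, a \in A -> b \in B -> lt a b.

Definition antichain (A : {set T}) : Prop :=
  forall a b, a \in A -> b \in A -> a != b -> ~~ le a b.

Definition mins (A : {set T}) : {set T} :=
  [set x in A | [forall y in A, ~~ lt y x]].

(* levels of the induced subposet D:
   lev_upto D k = D(0) u ... u D(k-1),  level D k = D(k) *)
Fixpoint lev_upto (D : {set T}) (k : nat) : {set T} :=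
  match k with
  | 0 => set0
  | k'.+1 => lev_upto D k' :|: mins (D :\: lev_upto D k')
  end.

Definition level (D : {set T}) (k : nat) : {set T} := mins (D :\: lev_upto D k).

Definition levels (D : {set T}) (k l : nat) : {set T} :=
  \bigcup_(k <= i < l.+1) level D i.

(* height of the induced subposet D: maximal length (number of steps) of a
   strict chain in D *)
Definition chain_in (D : {set T}) (s : seq T) : bool :=
  all (fun x => x \in D) s && sorted lt s.

Definition has_chain_of_length (D : {set T}) (n : nat) : bool :=
  [exists s : n.+1.-tuple T, chain_in D s].

Definition height_in (D : {set T}) : nat :=
  \max_(n < #|T|.+1 | has_chain_of_length D n) n.

Definition ordsum_antichains (n : nat) (A : {set T}) : Prop :=
  exists B C : {set T},
    [/\ A = B :|: C, [disjoint B & C], #|B| = n & #|C| = n] /\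
    [/\ antichain B, antichain C & setlt B C].

Definition two_antichain (D : {set T}) : Prop := #|D| = 2 /\ antichain D.

Definition crown4_stack (D : {set T}) : Prop :=
  1 <= height_in D /\
  forall i, i < height_in D -> ordsum_antichains 2 (level D i :|: level D i.+1).

Definition retraction_on (D : {set T}) (f : T -> T) : Prop :=
  [/\ forall x, x \in D -> f x \in D,
      forall x y, x \in D -> y \in D -> le x y -> le (f x) (f y)
    & forall x, x \in D -> f (f x) = f x].

(* P (= the whole type) is a section of width three *)
Definition section3 : Prop :=
  let h := height_in setT in
  1 <= h /\
  exists c : nat -> nat -> T,
  [/\ forall x, exists k j, [/\ k <= h, j < 3 & x = c k j]
    & forall k i l j, k <= h -> i < 3 -> l <= h -> j < 3 ->
        c k i = c l j -> k = l /\ i = j] /\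
  [/\ forall k j, k < h -> j < 3 -> lt (c k j) (c k.+1 j),
      forall k i j, k <= h -> i < 3 -> j < 3 -> i != j -> ~~ le (c k i) (c k j),
      forall k i l j, k <= h -> i < 3 -> l <= h -> j < 3 ->
        lt (c k i) (c l j) -> lt (c k ((i.+1) %% 3)) (c l ((j.+1) %% 3))
    & forall k, ~ ordsum_antichains 3 (level setT k :|: level setT k.+1)].

Definition nice : Prop :=
  forall x y, lt x y ->
    ~~ ([set z | lt x z] \subset [set z | le y z]) /\
    ~~ ([set z | lt z y] \subset [set z | le z x]).

Definition horizon_at_most (m : nat) : Prop :=
  forall k l, k + m <= l -> setlt (level setT k) (level setT l).

Definition in_N2 : Prop :=
  [/\ section3, nice, 2 <= height_in setT,
      horizon_at_most 2 & ~ horizon_at_most 1].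

Definition retractive_up_split (k : nat) (U : {set T}) (s t : T -> T) : Prop :=
  let h := height_in setT in
  let D1 := levels setT 0 k :\: U in
  let D2 := levels setT k.+1 h in
  [/\ k <= h - 1, U \subset levels setT 0 k,
      retraction_on D1 s & retraction_on D2 t] /\
  [/\ two_antichain (s @: D1) \/ crown4_stack (s @: D1)
    & two_antichain (t @: D2) \/ crown4_stack (t @: D2)].

End Posets.

(* The retracts S and T are stacks of 2-antichains, so the whole of S lies
   below T as soon as its top level lies below T(0).  A retraction r onto
   S (+) T sends u in U into T; the element v of T(0) other than r(u) cannot be
   t(p) for p > u, as r(u) <= r(p) = v would contradict minimality of v.
   Conversely, horizon 2 forces U into level k, so no element of U lies below
   P(0 -> k); sending u to the element of T(0) other than a free element v for
   u glues s and t into a retraction, because t maps everything above u to a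
   point different from v, which is therefore above r(u). *)

From Pilot Require Import Defs.
From mathcomp Require Import all_boot.
Set Implicit Arguments. Unset Strict Implicit. Unset Printing Implicit Defensive.

Section Levels.
Variables (T : finType) (le : rel T).
Hypothesis le_poset : is_poset le.

Local Notation lt := (lt le).
Local Notation mins := (mins le).
Local Notation lev_upto := (lev_upto le).
Local Notation level := (level le).

Lemma ltW x y : lt x y -> le x y.
Proof. by case/andP. Qed.

Lemma lt_irr x : ~~ lt x x.
Proof. by rewrite /Defs.lt eqxx. Qed.

Lemma le_refl : reflexive le.
Proof. by case: le_poset. Qed.

Lemma lt_le_trans x y z : lt x y -> le y z -> lt x z.
Proof.
have [_ [le_anti le_trans]] := le_poset.
case/andP=> neq_xy le_xy le_yz; rewrite /Defs.lt (le_trans _ _ _ le_xy le_yz) andbT.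
apply: contraNneq neq_xy => eq_xz; subst z.
by apply/eqP/le_anti; rewrite le_xy le_yz.
Qed.

Lemma le_lt_trans x y z : le x y -> lt y z -> lt x z.
Proof.
have [_ [le_anti le_trans]] := le_poset.
move=> le_xy /andP [neq_yz le_yz]; rewrite /Defs.lt (le_trans _ _ _ le_xy le_yz) andbT.
apply: contraNneq neq_yz => eq_xz; subst z.
by apply/eqP/le_anti; rewrite le_xy le_yz.
Qed.

Lemma lt_trans : transitive lt.
Proof. by move=> y x z lt_xy /ltW; apply: lt_le_trans. Qed.

Lemma minsP (A : {set T}) x :
  reflect (x \in A /\ forall y, y \in A -> ~~ lt y x) (x \in mins A).
Proof. by rewrite inE; apply: (iffP andP) => -[xA /forall_inP]. Qed.

Lemma level_inD (D : {set T}) n x : x \in level D n -> x \in D.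
Proof. by case/minsP; rewrite inE => /andP []. Qed.

Lemma level_notin_upto (D : {set T}) n x : x \in level D n -> x \notin lev_upto D n.
Proof. by case/minsP; rewrite inE => /andP []. Qed.

Lemma level0_minimal (D : {set T}) x y : x \in level D 0 -> y \in D -> ~~ lt y x.
Proof. by case/minsP=> _ x_min yD; apply: x_min; rewrite setD0. Qed.

Lemma lev_uptoP (D : {set T}) n x :
  reflect (exists2 i, i < n & x \in level D i) (x \in lev_upto D n).
Proof.
elim: n => [|n IH] /=; first by rewrite inE; constructor => -[].
rewrite inE; apply: (iffP orP) => [[/IH [i lt_in xi] | xn] | [i]].
- by exists i; rewrite // ltnS ltnW.
- by exists n.
- rewrite ltnS leq_eqVlt => /orP [/eqP -> | lt_in] xi; first by right.
  by left; apply/IH; exists i.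
Qed.

Lemma level_uniq (D : {set T}) i j x : x \in level D i -> x \in level D j -> i = j.
Proof.
move=> xi xj; case: (ltngtP i j) => // [lt_ij | lt_ji].
- by case/negP: (level_notin_upto xj); apply/lev_uptoP; exists i.
- by case/negP: (level_notin_upto xi); apply/lev_uptoP; exists j.
Qed.

Lemma level_lt (D : {set T}) i j x y :
  x \in level D i -> y \in level D j -> lt x y -> i < j.
Proof.
move=> xi yj lt_xy.
case: (boolP (x \in lev_upto D j)) => [/lev_uptoP [i' lt_i'j xi'] | xn].
  by rewrite (level_uniq xi xi').
by case/minsP: yj => _ /(_ x); rewrite inE xn (level_inD xi) lt_xy => /(_ isT).
Qed.

Lemma lev_upto_S (D : {set T}) n x : x \in D ->
  (forall y, y \in D -> lt y x -> y \in lev_upto D n) -> x \in lev_upto D n.+1.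
Proof.
move=> xD below; rewrite /= inE; case: (boolP (x \in lev_upto D n)) => //= xn.
apply/minsP; split => [|y]; first by rewrite inE xn.
by rewrite inE => /andP [yn yD]; apply: contra yn; apply: below.
Qed.

Lemma mem_lev_upto (D : {set T}) n x :
  #|[set y in D | lt y x]| < n -> x \in D -> x \in lev_upto D n.
Proof.
elim: n x => [|n IH] x; rewrite ?ltn0 // ltnS => card_le xD.
apply: lev_upto_S => // y yD lt_yx; apply: IH (yD); apply: leq_trans card_le.
apply: proper_card; apply/properP; split.
  by apply/subsetP => z; rewrite !inE => /andP [-> /lt_trans]; apply.
by exists y; rewrite !inE yD ?lt_yx ?(negbTE (lt_irr y)).
Qed.

Lemma level_exists (D : {set T}) x : x \in D -> exists i, x \in level D i.
Proof. by move=> xD; have /lev_uptoP [i _] := mem_lev_upto (ltnSn _) xD; exists i. Qed.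

Lemma level_pred (D : {set T}) n y :
  y \in level D n.+1 -> exists2 z, z \in level D n & lt z y.
Proof.
move=> yn1; have yD := level_inD yn1.
move: (level_notin_upto yn1); rewrite /= inE negb_or => /andP [yn ymin].
case: (boolP [exists z in D :\: lev_upto D n, lt z y]) => [|none]; last first.
  case/negP: ymin; apply/minsP; split => [|z zDn]; first by rewrite inE yn.
  by apply: contra none => lt_zy; apply/exists_inP; exists z.
case/exists_inP=> z; rewrite inE => /andP [zn zD] lt_zy.
have [j zj] := level_exists zD.
move: (level_lt zj yn1 lt_zy); rewrite ltnS leq_eqVlt => /orP [/eqP ej | lt_jn].
  by exists z; rewrite -?ej.
by case/negP: zn; apply/lev_uptoP; exists j.
Qed.

Lemma level_chain (D : {set T}) n y : y \in level D n ->
  exists x l, [/\ size l = n, last x l = y & chain_in le D (x :: l)].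
Proof.
elim: n y => [|n IH] y yn.
  by exists y, [::]; rewrite /chain_in /= (level_inD yn).
have [z zn lt_zy] := level_pred yn.
have [x [l [size_l last_l /andP [all_l path_l]]]] := IH z zn.
exists x, (rcons l y); rewrite size_rcons size_l last_rcons; split => //.
rewrite /chain_in -rcons_cons all_rcons (level_inD yn) all_l /=.
by rewrite rcons_path last_l lt_zy andbT.
Qed.

Lemma level_le_height (D : {set T}) n y : y \in level D n -> n <= height_in le D.
Proof.
case/level_chain=> x [l [size_l _ chain]].
have size_s : size (x :: l) == n.+1 by rewrite /= size_l.
have n_small : n < #|T|.+1.
  have uniq_s : uniq (x :: l).
    case/andP: chain => _.
    exact: (@sorted_uniq _ (Defs.lt le) lt_trans (fun z => negbTE (lt_irr z))).
  by have := max_card (mem (x :: l)); rewrite (card_uniqP uniq_s) (eqP size_s) => /ltnW.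
apply: (@leq_bigmax_cond _ (fun i : 'I_#|T|.+1 => has_chain_of_length le D i)
  (fun i => nat_of_ord i) (Ordinal n_small)).
by apply/existsP; exists (Tuple size_s).
Qed.

Lemma level_cover (D : {set T}) x :
  x \in D -> exists2 i, i <= height_in le D & x \in level D i.
Proof. by case/level_exists=> i xi; exists i => //; apply: level_le_height xi. Qed.

Lemma levelsP (D : {set T}) a b x :
  reflect (exists2 i, a <= i <= b & x \in level D i) (x \in levels le D a b).
Proof.
rewrite /levels (big_morph (fun A : {set T} => x \in A) (in_setU x) (in_set0 x)).
rewrite big_has; apply: (iffP hasP) => -[i].
  by rewrite mem_index_iota ltnS; exists i.
by exists i; rewrite ?mem_index_iota ?ltnS.
Qed.

End Levels.

Lemma card2_other (T : finType) (A : {set T}) x :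
  #|A| = 2 -> exists2 v, v \in A & v != x.
Proof.
move/eqP/cards2P=> [a [b [neq_ab ->]]].
case: (eqVneq a x) => [<- | neq_ax]; first by exists b; rewrite ?set22 1?eq_sym.
by exists a; rewrite ?set21.
Qed.

Lemma card2_eq_other (T : finType) (A : {set T}) v w z :
  #|A| = 2 -> v \in A -> w \in A -> z \in A -> w != v -> z != v -> z = w.
Proof.
move/eqP/cards2P=> [a [b [neq_ab ->]]].
by move=> /set2P[]-> /set2P[]-> /set2P[]->; rewrite ?eqxx // eq_sym.
Qed.

Section Stacks.
Variables (T : finType) (le : rel T).
Hypothesis le_poset : is_poset le.

Local Notation lt := (lt le).
Local Notation level := (level le).
Local Notation height := (height_in le).

Definition antichain2_or_stack (D : {set T}) :=
  two_antichain le D \/ crown4_stack le D.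

Lemma antichain_height (D : {set T}) : antichain le D -> height D = 0.
Proof.
move=> anti; apply/eqP; rewrite -leqn0; apply/bigmax_leqP => n.
case/existsP=> -[[|a [|b l]] //=]; first by rewrite eqSS => /eqP <-.
move=> _ /andP [/and3P [aD bD _] /andP [/andP [neq_ab le_ab] _]].
by move: (anti a b aD bD neq_ab); rewrite le_ab.
Qed.

Lemma antichain_level0 (D : {set T}) : antichain le D -> level D 0 = D.
Proof.
move=> anti; apply/setP => x; rewrite /Defs.level /= setD0.
apply/minsP/idP => [[] // | xD].
split=> // y yD; apply/negP => /andP [neq_yx le_yx].
by move: (anti y x yD xD neq_yx); rewrite le_yx.
Qed.

(* The two antichains of the ordinal sum are necessarily the levels [i] and [i.+1]. *)
Lemma ordsum_levels (D : {set T}) i :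
  ordsum_antichains le 2 (level D i :|: level D i.+1) ->
  [/\ setlt le (level D i) (level D i.+1), #|level D i| = 2 & #|level D i.+1| = 2].
Proof.
move=> [B [C [[EU _ card_B card_C] [_ _ lt_BC]]]].
have BC_levels b c : b \in B -> c \in C -> b \in level D i /\ c \in level D i.+1.
  move=> bB cC; have := level_lt _ _ (lt_BC b c bB cC).
  have : b \in level D i :|: level D i.+1 by rewrite EU inE bB.
  have : c \in level D i :|: level D i.+1 by rewrite EU inE cC orbT.
  rewrite !in_setU => /orP [] ci /orP [] bi /(_ _ _ _ bi ci) //; rewrite ?ltnn //.
  by rewrite ltnNge leqnSn.
have [b0 b0B] : exists b, b \in B by apply/card_gt0P; rewrite card_B.
have [c0 c0C] : exists c, c \in C by apply/card_gt0P; rewrite card_C.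
have lvl_B : level D i = B.
  apply/eqP; rewrite eqEsubset; apply/andP; split; apply/subsetP => x; last first.
    by move=> xB; case: (BC_levels x c0 xB c0C).
  move=> xi; have : x \in B :|: C by rewrite -EU in_setU xi.
  case/setUP=> // xC; have [_ xi1] := BC_levels b0 x b0B xC.
  by move/eqP: (level_uniq xi xi1); rewrite ltn_eqF ?ltnSn.
have lvl_C : level D i.+1 = C.
  apply/eqP; rewrite eqEsubset; apply/andP; split; apply/subsetP => x; last first.
    by move=> xC; case: (BC_levels b0 x b0B xC).
  move=> xi1; have : x \in B :|: C by rewrite -EU in_setU xi1 orbT.
  case/setUP=> // xB; have [xi _] := BC_levels x c0 xB c0C.
  by move/eqP: (level_uniq xi xi1); rewrite ltn_eqF ?ltnSn.
by rewrite lvl_B lvl_C.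
Qed.

Lemma stack_level_card2 (D : {set T}) i :
  antichain2_or_stack D -> i <= height D -> #|level D i| = 2.
Proof.
case=> [[card_D anti] | [h_ge1 ordsum]].
  by rewrite antichain_height // leqn0 => /eqP ->; rewrite antichain_level0.
rewrite leq_eqVlt => /orP [/eqP -> | lt_ih].
  have lt_pred : (height D).-1 < height D by rewrite prednK.
  by case: (ordsum_levels (ordsum _ lt_pred)); rewrite prednK.
by case: (ordsum_levels (ordsum i lt_ih)).
Qed.

Lemma stack_level_succ (D : {set T}) i :
  antichain2_or_stack D -> i < height D -> setlt le (level D i) (level D i.+1).
Proof.
case=> [[_ anti] | [_ ordsum] lt_ih]; first by rewrite antichain_height.
by case: (ordsum_levels (ordsum i lt_ih)).
Qed.

Lemma stack_level_lt (D : {set T}) i j :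
  antichain2_or_stack D -> i < j -> j <= height D -> setlt le (level D i) (level D j).
Proof.
move=> stack; elim: j => // j IH; rewrite ltnS leq_eqVlt => /orP [/eqP -> | lt_ij] lt_jh.
  exact: stack_level_succ.
have [b bj] : exists b, b \in level D j.
  by apply/card_gt0P; rewrite (stack_level_card2 stack (ltnW lt_jh)).
move=> x z xi zj1; have lt_xb := IH lt_ij (ltnW lt_jh) x b xi bj.
exact: (lt_trans le_poset lt_xb (stack_level_succ stack lt_jh bj zj1)).
Qed.

Lemma stack_le_top (D : {set T}) x : antichain2_or_stack D -> x \in D ->
  exists2 a, a \in level D (height D) & le x a.
Proof.
move=> stack xD; have [i le_ih xi] := level_cover le_poset xD.
have [a ah] : exists a, a \in level D (height D).
  by apply/card_gt0P; rewrite (stack_level_card2 stack (leqnn _)).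
move: le_ih; rewrite leq_eqVlt => /orP [/eqP eq_ih | lt_ih].
  by exists x; rewrite -?eq_ih ?le_refl.
by exists a => //; apply: ltW; exact: (stack_level_lt stack lt_ih (leqnn _) xi ah).
Qed.

Lemma stack_bottom_lt (D : {set T}) b y : antichain2_or_stack D ->
  b \in level D 0 -> y \in D -> y \notin level D 0 -> lt b y.
Proof.
move=> stack b0 yD; have [i le_ih yi] := level_cover le_poset yD.
case: i le_ih yi => [|i] le_ih yi; first by rewrite yi.
by move=> _; exact: (stack_level_lt stack (ltn0Sn i) le_ih b0 yi).
Qed.

Lemma stack_bottom_le (D : {set T}) y : antichain2_or_stack D -> y \in D ->
  exists2 b, b \in level D 0 & le b y.
Proof.
move=> stack yD; case: (boolP (y \in level D 0)) => [y0 | yn0].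
  by exists y; rewrite ?le_refl.
have [b b0] : exists b, b \in level D 0.
  by apply/card_gt0P; rewrite (stack_level_card2 stack (leq0n _)).
by exists b => //; apply/ltW/(stack_bottom_lt stack b0 yD yn0).
Qed.

Lemma setlt_stacks (A B : {set T}) :
  antichain2_or_stack A -> antichain2_or_stack B ->
  setlt le (level A (height A)) (level B 0) -> setlt le A B.
Proof.
move=> stackA stackB top_lt_bottom x y xA yB.
have [a atop le_xa] := stack_le_top stackA xA.
have [b bbot le_by] := stack_bottom_le stackB yB.
have lt_ab := top_lt_bottom a b atop bbot.
exact: (le_lt_trans le_poset le_xa (lt_le_trans le_poset lt_ab le_by)).
Qed.

End Stacks.

Section UpSplit.
Variables (T : finType) (le : rel T) (k : nat) (U : {set T}) (s t : T -> T).
Hypotheses (le_poset : is_poset le) (up_split : retractive_up_split le k U s t).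

Local Notation lt := (lt le).
Local Notation level := (level le).
Local Notation low := (levels le setT 0 k).
Local Notation D1 := (low :\: U).
Local Notation D2 := (levels le setT k.+1 (height_in le setT)).
Local Notation Sr := (s @: D1).
Local Notation Tr := (t @: D2).

Lemma U_sub_low : U \subset low.
Proof. by case: up_split => -[]. Qed.

Lemma s_retraction : retraction_on le D1 s.
Proof. by case: up_split => -[]. Qed.

Lemma t_retraction : retraction_on le D2 t.
Proof. by case: up_split => -[]. Qed.

Lemma stack_Sr : antichain2_or_stack le Sr.
Proof. by case: up_split => _ []. Qed.

Lemma stack_Tr : antichain2_or_stack le Tr.
Proof. by case: up_split => _ []. Qed.

Lemma card_bottom_Tr : #|level Tr 0| = 2.
Proof. exact: (stack_level_card2 stack_Tr (leq0n _)). Qed.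

Lemma t_fix y : y \in Tr -> t y = y.
Proof. by case/imsetP=> p pD2 ->; case: t_retraction => _ _ ->. Qed.

Lemma Tr_sub_D2 y : y \in Tr -> y \in D2.
Proof. by case/imsetP=> p pD2 ->; case: t_retraction => /(_ p pD2). Qed.

Lemma D2_notin_low x : x \in D2 -> x \notin low.
Proof.
case/levelsP=> i /andP [lt_ki _] xi; apply/negP => /levelsP [j /andP [_ le_jk] xj].
by move: lt_ki; rewrite (level_uniq xi xj) ltnNge le_jk.
Qed.

Lemma up_split_cases x : [\/ x \in D1, x \in U | x \in D2].
Proof.
case: (boolP (x \in U)) => xU; first by constructor 2.
have [i le_ih xi] := level_cover le_poset (in_setT x).
case: (leqP i k) => [le_ik | lt_ki]; [constructor 1 | constructor 3].
  by rewrite inE xU; apply/levelsP; exists i.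
by apply/levelsP; exists i; rewrite ?lt_ki.
Qed.

Lemma not_lt_low i x y : k <= i -> x \in level setT i -> y \in low -> ~~ lt x y.
Proof.
move=> le_ki xi /levelsP [j /andP [_ le_jk] yj]; apply/negP => /(level_lt xi yj).
by rewrite ltnNge (leq_trans le_jk le_ki).
Qed.

Lemma retraction_free_bottom r : retraction_on le setT r ->
  (forall x, x \in U -> r x \in Tr) -> (forall x, x \in D2 -> r x = t x) ->
  forall u, u \in U -> exists2 v, v \in level Tr 0 &
    forall p, p \in D2 -> t p = v -> ~~ lt u p.
Proof.
move=> [_ r_mono _] r_U r_D2 u uU.
have [v v0 neq_v] := card2_other (r u) card_bottom_Tr.
exists v => // p pD2 tp_v; apply/negP => lt_up.
have := r_mono u p (in_setT _) (in_setT _) (ltW lt_up); rewrite (r_D2 p pD2) tp_v => le_ruv.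
by move: (level0_minimal v0 (r_U u uU)); rewrite /Defs.lt eq_sym neq_v le_ruv.
Qed.

Hypothesis horizon2 : horizon_at_most le 2.
Hypothesis top_lt_bottom : setlt le (level Sr (height_in le Sr)) (level Tr 0).
Hypothesis free_bottom : forall u, u \in U -> exists2 v, v \in level Tr 0 &
  forall p, p \in D2 -> t p = v -> ~~ lt u p.

(* An element of [U] below level [k] would lie below all of [D2] by horizon 2. *)
Lemma U_sub_level_k u : u \in U -> u \in level setT k.
Proof.
move=> uU; have /levelsP [i /andP [_ le_ik] ui] := subsetP U_sub_low u uU.
have [v /level_inD /imsetP [p pD2 ->] free_v] := free_bottom uU.
have /levelsP [j /andP [lt_kj _] pj] := pD2.
case: (ltngtP i k) le_ik => [lt_ik _ | // | eq_ik _]; last by rewrite -eq_ik.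
have le_i2j : i + 2 <= j by rewrite addn2 (leq_ltn_trans lt_ik lt_kj).
by move: (free_v p pD2 erefl); rewrite (horizon2 le_i2j ui pj).
Qed.

Lemma lt_low x y : lt x y -> y \in low -> x \in D1.
Proof.
move=> lt_xy ylow; case: (up_split_cases x) => // [xU | xD2].
  by move: (not_lt_low (leqnn k) (U_sub_level_k xU) ylow); rewrite lt_xy.
case/levelsP: xD2 => i /andP [lt_ki _] xi.
by move: (not_lt_low (ltnW lt_ki) xi ylow); rewrite lt_xy.
Qed.

Definition free_bottom_of u :=
  odflt u [pick v in level Tr 0 | [forall p in D2, (t p == v) ==> ~~ lt u p]].

Definition other_bottom u := odflt u [pick w in level Tr 0 | w != free_bottom_of u].

Lemma free_bottom_ofP u : u \in U -> free_bottom_of u \in level Tr 0 /\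
  forall p, p \in D2 -> t p = free_bottom_of u -> ~~ lt u p.
Proof.
move=> uU; rewrite /free_bottom_of.
case: pickP => [v /andP [v0 /forall_inP free_v] | none].
  by split=> // p pD2 tp_v; apply: (implyP (free_v p pD2)); apply/eqP.
have [v v0 free_v] := free_bottom uU.
move: (none v); rewrite v0 => /negbT/forall_inPn [p pD2]; rewrite negb_imply negbK.
by case/andP=> /eqP /(free_v p pD2) /negbTE ->.
Qed.

Lemma other_bottomP u :
  other_bottom u \in level Tr 0 /\ other_bottom u != free_bottom_of u.
Proof.
rewrite /other_bottom; case: pickP => [w /andP [] // | none].
have [w w0 neq_w] := card2_other (free_bottom_of u) card_bottom_Tr.
by move: (none w); rewrite w0 neq_w.
Qed.

Lemma other_bottom_in_Tr u : other_bottom u \in Tr.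
Proof. by case: (other_bottomP u) => /level_inD. Qed.

(* [t y] is not the free bottom element of [x], so it is the other one or above it. *)
Lemma other_bottom_le_t x y :
  x \in U -> y \in D2 -> lt x y -> le (other_bottom x) (t y).
Proof.
move=> xU yD2 lt_xy; have [v0 free_v] := free_bottom_ofP xU.
have [w0 neq_wv] := other_bottomP x.
have ty_Tr : t y \in Tr := imset_f t yD2.
have neq_tyv : t y != free_bottom_of x.
  by apply/eqP => /(free_v y yD2); rewrite lt_xy.
case: (boolP (t y \in level Tr 0)) => [ty0 | tyn0].
  by rewrite (card2_eq_other card_bottom_Tr v0 w0 ty0 neq_wv neq_tyv) le_refl.
exact: ltW (stack_bottom_lt le_poset stack_Tr w0 ty_Tr tyn0).
Qed.

Definition glued_retraction x :=
  if x \in D1 then s x else if x \in U then other_bottom x else t x.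

Local Notation r := glued_retraction.

Lemma glued_D1 x : x \in D1 -> r x = s x.
Proof. by rewrite /glued_retraction => ->. Qed.

Lemma glued_U x : x \in U -> r x = other_bottom x.
Proof. by move=> xU; rewrite /glued_retraction inE xU. Qed.

Lemma glued_D2 x : x \in D2 -> r x = t x.
Proof.
move/D2_notin_low => xnlow; rewrite /glued_retraction inE (negbTE xnlow) andbF.
by rewrite (negbTE (contra (subsetP U_sub_low x) xnlow)).
Qed.

Lemma glued_mono x y : le x y -> le (r x) (r y).
Proof.
move=> le_xy; case: (eqVneq x y) => [<- | neq_xy]; first exact: le_refl.
have lt_xy : lt x y by rewrite /Defs.lt neq_xy.
have Sr_lt_Tr := setlt_stacks le_poset stack_Sr stack_Tr top_lt_bottom.
have [_ s_mono _] := s_retraction; have [_ t_mono _] := t_retraction.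
case: (up_split_cases y) => [yD1 | yU | yD2].
- have xD1 := lt_low lt_xy (subsetP (subsetDl _ _) y yD1).
  by rewrite (glued_D1 xD1) (glued_D1 yD1); apply: s_mono.
- have xD1 := lt_low lt_xy (subsetP U_sub_low y yU).
  rewrite (glued_D1 xD1) (glued_U yU).
  exact: ltW (Sr_lt_Tr _ _ (imset_f s xD1) (other_bottom_in_Tr y)).
- rewrite (glued_D2 yD2); case: (up_split_cases x) => [xD1 | xU | xD2].
  + rewrite (glued_D1 xD1).
    exact: ltW (Sr_lt_Tr _ _ (imset_f s xD1) (imset_f t yD2)).
  + by rewrite (glued_U xU); apply: other_bottom_le_t.
  + by rewrite (glued_D2 xD2); apply: t_mono.
Qed.

Lemma glued_idem x : r (r x) = r x.
Proof.
have [s_in _ s_idem] := s_retraction.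
case: (up_split_cases x) => [xD1 | xU | xD2].
- by rewrite (glued_D1 xD1) (glued_D1 (s_in x xD1)) s_idem.
- rewrite (glued_U xU) (glued_D2 (Tr_sub_D2 (other_bottom_in_Tr x))).
  by rewrite t_fix ?other_bottom_in_Tr.
- by rewrite (glued_D2 xD2) (glued_D2 (Tr_sub_D2 (imset_f t xD2))) t_fix ?imset_f.
Qed.

Lemma glued_image : r @: setT = Sr :|: Tr.
Proof.
apply/setP => y; apply/imsetP/setUP.
  move=> [x _ ->]; case: (up_split_cases x) => [xD1 | xU | xD2].
  + by left; rewrite glued_D1 ?imset_f.
  + by right; rewrite glued_U ?other_bottom_in_Tr.
  + by right; rewrite glued_D2 ?imset_f.
case=> /imsetP [x xD ->]; exists x => //.
  by rewrite glued_D1.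
by rewrite glued_D2.
Qed.

Lemma glued_retraction_on : retraction_on le setT r.
Proof. by split=> [x _ | x y _ _ /glued_mono | x _]; rewrite ?in_setT ?glued_idem. Qed.

End UpSplit.

Unset Implicit Arguments.

Theorem proposition6p3 (T : finType) (le : rel T) (k : nat) (U : {set T})
  (s t : T -> T) :
  is_poset le -> in_N2 le -> retractive_up_split le k U s t ->
  let h := height_in le setT in
  let D1 := levels le setT 0 k :\: U in
  let D2 := levels le setT k.+1 h in
  let S := s @: D1 in
  let Tt := t @: D2 in
  (exists r : T -> T,
     [/\ retraction_on le setT r, r @: setT = S :|: Tt & setlt le S Tt] /\
     [/\ forall x, x \in D1 -> r x = s x,
         forall x, x \in U -> r x \in Tt
       & forall x, x \in D2 -> r x = t x])
  <->
  (setlt le (level le S (height_in le S)) (level le Tt 0) /\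
   forall u, u \in U -> exists2 v, v \in level le Tt 0 &
     forall p, p \in D2 -> t p = v -> ~~ lt le u p).
Proof.
move=> le_poset [_ _ _ horizon2 _] up_split h D1 D2 S Tt; split.
- move=> [r [[r_retr _ S_lt_T] [_ r_U r_D2]]]; split.
    by move=> a b /level_inD aS /level_inD bT; apply: S_lt_T.
  exact: (retraction_free_bottom up_split r_retr r_U r_D2).
- move=> [top_lt_bottom free_bottom].
  exists (glued_retraction le k U s t); split; split.
  + exact: glued_retraction_on le_poset up_split horizon2 top_lt_bottom free_bottom.
  + exact: glued_image le_poset up_split.
  + exact: (setlt_stacks le_poset (stack_Sr up_split) (stack_Tr up_split) top_lt_bottom).
  + exact: glued_D1.
  + by move=> x xU; rewrite glued_U //; exact: (other_bottom_in_Tr up_split).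
  + exact: glued_D2 up_split.
Qed.
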